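(* Consider the model described in the context and suppose the Lipschitz assumption holds. Then for every $t\in\mathbb N_T$ there exists a constant $K_t>0$ such that for all $z_1,z_2\in\Delta(\mathcal X)$, $$|\hat V_t(z_1)-\hat V_t(z_2)|\le K_t\|z_1-z_2\|_\infty.$$
   Context: Let $T\in\mathbb N$, $\mathbb N_T=\{1,\dots,T\}$, and let $\mathcal X,\mathcal U,\mathcal W$ be finite sets. Let $\mathcal I(\mathcal X)=[0,1]^{\mathcal X}$ and $\Delta(\mathcal X)$ the set of probability vectors on $\mathcal X$. For each $t$ let $f_t:\mathcal X\times\mathcal U\times\mathcal W\times\mathcal I(\mathcal X)\to\mathcal X$, let $\mathbb P(w_t=\cdot)$ be a probability law on $\mathcal W$, and define transition probabilities $\mathbb P(y\mid x,u,z)=\sum_{w\in\mathcal W}\mathbb 1(f_t(x,u,w,z)=y)\,\mathbb P(w_t=w)$; let $\ell_t:\mathcal X\times\mathcal U\times\mathcal I(\mathcal X)\to\mathbb R_{\ge0}$ be cost functions. Lipschitz assumption: there exist $K^1_t,K^2_t>0$ with $|\mathbb P(y|x,u,z_1)-\mathbb P(y|x,u,z_2)|\le K^1_t\|z_1-z_2\|_\infty$ and $|\ell_t(x,u,z_1)-\ell_t(x,u,z_2)|\le K^2_t\|z_1-z_2\|_\infty$ for all $x,y,u$ and $z_1,z_2\in\mathcal I(\mathcal X)$. $\mathcal G$ is the set of all maps $\gamma:\mathcal X\to\mathcal U$. Define $\hat f_t(z,\gamma)(y)=\sum_x z(x)\mathbb P(y|x,\gamma(x),z)$, $\hat c_t(z,\gamma)=\sum_x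 z(x)\ell_t(x,\gamma(x),z)$, and $\hat V_t:\Delta(\mathcal X)\to\mathbb R$ by $\hat V_{T+1}\equiv0$, $\hat V_t(z)=\min_{\gamma\in\mathcal G}\big(\hat c_t(z,\gamma)+\hat V_{t+1}(\hat f_t(z,\gamma))\big)$, $t=T,\dots,1$. *)

From HB Require Import structures.
From mathcomp Require Import all_boot all_order all_algebra.
From mathcomp Require Import reals.
Set Implicit Arguments. Unset Strict Implicit. Unset Printing Implicit Defensive.
Import Order.TTheory GRing.Theory Num.Theory.
Local Open Scope ring_scope.

Section Model.
Variables (R : realType) (X U W : finType).

Definition supnorm (z : X -> R) : R := \big[Num.max/0]_(x : X) `|z x|.

Definition inI (z : X -> R) : Prop := forall x, 0 <= z x <= 1.

Definition inDelta (z : X -> R) : Prop :=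
  (forall x, 0 <= z x) /\ \sum_(x : X) z x = 1.

Definition is_law (p : W -> R) : Prop :=
  (forall w, 0 <= p w) /\ \sum_(w : W) p w = 1.

Variables (f : nat -> X -> U -> W -> (X -> R) -> X)
          (Pw : nat -> W -> R)
          (ell : nat -> X -> U -> (X -> R) -> R).

(* P(y | x, u, z) at time t *)
Definition trans (t : nat) (y x : X) (u : U) (z : X -> R) : R :=
  \sum_(w : W) (f t x u w z == y)%:R * Pw t w.

Definition fhat (t : nat) (z : X -> R) (g : {ffun X -> U}) : X -> R :=
  fun y => \sum_(x : X) z x * trans t y x (g x) z.

Definition chat (t : nat) (z : X -> R) (g : {ffun X -> U}) : R :=
  \sum_(x : X) z x * ell t x (g x) z.

Definition minG (F : {ffun X -> U} -> R) : R :=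
  match [pick g : {ffun X -> U}] with
  | Some g0 => \big[Num.min/F g0]_(g : {ffun X -> U}) F g
  | None => 0
  end.

(* Vaux n t z : value with n stages left starting at stage t *)
Fixpoint Vaux (n t : nat) (z : X -> R) : R :=
  match n with
  | 0 => 0
  | n'.+1 => minG (fun g => chat t z g + Vaux n' t.+1 (fhat t z g))
  end.

(* hat V_t for t = 1..T+1, with hat V_{T+1} = 0 *)
Definition Vhat (T t : nat) (z : X -> R) : R := Vaux (T.+1 - t) t z.

End Model.

(* Backward induction on the number of remaining stages.  On the simplex the
   mean-field dynamics [fhat t . g] and the expected cost [chat t . g] are
   Lipschitz uniformly in the decision rule [g]: each is a sum
   [sum_x z x * a z x] whose factor [a] is bounded (a transition probability,
   or a cost, bounded on the simplex by the Lipschitz assumption) and Lipschitz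
   in [z].  Hence so is [z |-> chat t z g + V (fhat t z g)] whenever [V] is
   Lipschitz, and a minimum over the finite set of decision rules of uniformly
   Lipschitz functions is Lipschitz with the same constant. *)

From HB Require Import structures.
From mathcomp Require Import all_boot all_order all_algebra.
From mathcomp Require Import reals.
From mathcomp Require Import lra zify.
Import Order.TTheory GRing.Theory Num.Theory.
Local Open Scope ring_scope.
Set Implicit Arguments. Unset Strict Implicit.

Section Simplex.
Variables (R : realType) (X : finType).

Lemma supnorm_ge0 (d : X -> R) : 0 <= supnorm d.
Proof. by apply: (big_ind (fun y => 0 <= y)) => // a b a0 b0; rewrite le_max a0. Qed.

Lemma normr_le_supnorm (d : X -> R) x : `|d x| <= supnorm d.
Proof. by rewrite /supnorm (bigD1 x) //= le_max lexx. Qed.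

Lemma supnorm_le (d : X -> R) (c : R) :
  0 <= c -> (forall x, `|d x| <= c) -> supnorm d <= c.
Proof. by move=> c0 dc; apply: bigmax_le. Qed.

Lemma inDelta_le1 (z : X -> R) x : inDelta z -> z x <= 1.
Proof. by case=> z0 <-; rewrite (bigD1 x) //= lerDl sumr_ge0. Qed.

Lemma inDelta_inI (z : X -> R) : inDelta z -> inI z.
Proof. by move=> zD x; rewrite inDelta_le1 // andbT; case: zD. Qed.

Definition lipschitz_on_Delta (V : (X -> R) -> R) (K : R) : Prop :=
  forall z1 z2 : X -> R, inDelta z1 -> inDelta z2 ->
    `|V z1 - V z2| <= K * supnorm (fun x => z1 x - z2 x).

Lemma dist_weighted_sums_le (z1 z2 a b : X -> R) (A e : R) :
  inDelta z2 -> (forall x, `|a x| <= A) -> (forall x, `|a x - b x| <= e) ->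
  `|\sum_x z1 x * a x - \sum_x z2 x * b x|
    <= #|X|%:R * A * supnorm (fun x => z1 x - z2 x) + e.
Proof.
move=> [z2_ge0 z2_sum1] aA abe; set s := supnorm _.
have -> : \sum_x z1 x * a x - \sum_x z2 x * b x
          = \sum_x ((z1 x - z2 x) * a x + z2 x * (a x - b x)).
  by rewrite -sumrB; apply: eq_bigr => x _; rewrite mulrBl mulrBr addrA subrK.
apply: le_trans (ler_norm_sum _ _ _) _.
apply: le_trans (_ : \sum_x (s * A + z2 x * e) <= _).
  apply: ler_sum => x _; apply: le_trans (ler_normD _ _) _.
  rewrite !normrM (ger0_norm (z2_ge0 x)); apply: lerD.
    by apply: ler_pM => //; apply: normr_le_supnorm.
  exact: ler_wpM2l.
rewrite big_split /= sumr_const -mulr_suml z2_sum1 mul1r.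
by rewrite -[_ *+ _]mulr_natl [s * A]mulrC mulrA.
Qed.

Variable U : finType.

Lemma minG_le (F : {ffun X -> U} -> R) g : minG F <= F g.
Proof.
rewrite /minG; case: pickP => [g0 _|/(_ g)//].
by rewrite (bigD1 g) //= ge_min lexx.
Qed.

Lemma le_minG (F : {ffun X -> U} -> R) y (g0 : {ffun X -> U}) :
  (forall g, y <= F g) -> y <= minG F.
Proof.
move=> yF; rewrite /minG; case: pickP => [g1 _|/(_ g0)//].
by apply: le_bigmin => // g _; apply: yF.
Qed.

Lemma minG_dist_le (F G : {ffun X -> U} -> R) (c : R) : 0 <= c ->
  (forall g, `|F g - G g| <= c) -> `|minG F - minG G| <= c.
Proof.
move=> c0 FGc; case: (pickP (@predT {ffun X -> U})) => [g0 _|noG]; last first.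
  by rewrite /minG; case: pickP => [g|]; [have := noG g | rewrite subrr normr0].
rewrite ler_distl; apply/andP; split.
  apply: (le_minG (F := F) g0) => g; have := minG_le G g; have := FGc g.
  by rewrite ler_distl => /andP[]; lra.
rewrite -lerBlDr; apply: (le_minG (F := G) g0) => g.
have := minG_le F g; have := FGc g.
by rewrite ler_distl => /andP[]; lra.
Qed.

End Simplex.

Section Stage.
Variables (R : realType) (X U W : finType)
  (f : nat -> X -> U -> W -> (X -> R) -> X)
  (Pw : nat -> W -> R)
  (ell : nat -> X -> U -> (X -> R) -> R) (t : nat) (K1 K2 : R).
Hypothesis law : is_law (Pw t).
Hypothesis K1_gt0 : 0 < K1.
Hypothesis K2_gt0 : 0 < K2.
Hypothesis trans_lip :
  forall (x y : X) (u : U) (z1 z2 : X -> R), inI z1 -> inI z2 ->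
  `|trans f Pw t y x u z1 - trans f Pw t y x u z2|
    <= K1 * supnorm (fun x' => z1 x' - z2 x').
Hypothesis ell_lip : forall (x : X) (u : U) (z1 z2 : X -> R), inI z1 -> inI z2 ->
  `|ell t x u z1 - ell t x u z2| <= K2 * supnorm (fun x' => z1 x' - z2 x').

Lemma trans_ge0 y x u z : 0 <= trans f Pw t y x u z.
Proof. by apply: sumr_ge0 => w _; apply: mulr_ge0 => //; case: law. Qed.

Lemma trans_le1 y x u z : trans f Pw t y x u z <= 1.
Proof.
case: law => Pw_ge0 <-; apply: ler_sum => w _.
by apply: ler_piMl => //; case: eqP.
Qed.

Lemma sum_trans x u z : \sum_y trans f Pw t y x u z = 1.
Proof.
case: law => _ <-; rewrite /trans exchange_big /=; apply: eq_bigr => w _.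
rewrite -mulr_suml (bigD1 (f t x u w z)) //= eqxx big1 ?addr0 ?mul1r //.
by move=> y /negbTE; rewrite eq_sym => ->.
Qed.

Lemma fhat_inDelta z g : inDelta z -> inDelta (fhat f Pw t z g).
Proof.
case=> z_ge0 z_sum1; split=> [y|].
  by apply: sumr_ge0 => x _; rewrite mulr_ge0 ?trans_ge0.
rewrite /fhat exchange_big /= -z_sum1; apply: eq_bigr => x _.
by rewrite -mulr_sumr sum_trans mulr1.
Qed.

Lemma fhat_lipschitz g z1 z2 : inDelta z1 -> inDelta z2 ->
  supnorm (fun y => fhat f Pw t z1 g y - fhat f Pw t z2 g y)
    <= (#|X|%:R + K1) * supnorm (fun x => z1 x - z2 x).
Proof.
move=> z1D z2D; apply: supnorm_le => [|y].
  by rewrite mulr_ge0 ?supnorm_ge0 // addr_ge0 ?ler0n // ltW.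
rewrite mulrDl -[X in X * _]mulr1.
apply: dist_weighted_sums_le => // [x|x].
  by rewrite ger0_norm ?trans_le1 ?trans_ge0.
by apply: trans_lip; apply: inDelta_inI.
Qed.

Lemma ell_bounded : exists A : R, 0 <= A /\
  forall x u z, inDelta z -> `|ell t x u z| <= A.
Proof.
pose ell0 x u := ell t x u (fun _ => 0).
exists (\sum_(p : X * U) `|ell0 p.1 p.2| + K2); split=> [|x u z zD].
  by apply: addr_ge0 (ltW K2_gt0); apply: sumr_ge0.
have I0 : inI (fun _ : X => 0 : R) by move=> ?; rewrite lexx ler01.
have z_le1 : supnorm (fun x' => z x' - 0) <= 1.
  by apply: supnorm_le => // x'; rewrite subr0 ger0_norm ?inDelta_le1 //; case: zD.
rewrite -[ell t x u z](subrK (ell0 x u)) addrC.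
apply: le_trans (ler_normD _ _) _; apply: lerD.
  by rewrite (bigD1 (x, u)) //= lerDl sumr_ge0.
apply: le_trans (ell_lip x u (inDelta_inI zD) I0) _.
by rewrite -[leRHS]mulr1 ler_pM2l.
Qed.

Lemma chat_lipschitz : exists Kc : R, 0 < Kc /\
  forall g z1 z2, inDelta z1 -> inDelta z2 ->
    `|chat ell t z1 g - chat ell t z2 g| <= Kc * supnorm (fun x => z1 x - z2 x).
Proof.
have [A [A_ge0 ellA]] := ell_bounded.
exists (#|X|%:R * A + K2); split=> [|g z1 z2 z1D z2D].
  by rewrite ltr_wpDl // mulr_ge0 ?ler0n.
rewrite mulrDl; apply: dist_weighted_sums_le => // x.
  exact: ellA.
by apply: ell_lip; apply: inDelta_inI.
Qed.

Lemma bellman_lipschitz (V : (X -> R) -> R) (K : R) :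
  0 < K -> lipschitz_on_Delta V K ->
  exists K' : R, 0 < K' /\ lipschitz_on_Delta
    (fun z => minG (fun g => chat ell t z g + V (fhat f Pw t z g))) K'.
Proof.
move=> K_gt0 V_lip; have [Kc [Kc_gt0 chat_lip]] := chat_lipschitz.
pose K' := Kc + K * (#|X|%:R + K1).
have K'_gt0 : 0 < K' by rewrite addr_gt0 // mulr_gt0 // ltr_wpDl.
exists K'; split=> // z1 z2 z1D z2D.
apply: minG_dist_le => [|g]; first exact: mulr_ge0 (ltW K'_gt0) (supnorm_ge0 _).
rewrite opprD addrACA; apply: le_trans (ler_normD _ _) _.
rewrite mulrDl -mulrA; apply: lerD; first exact: chat_lip.
apply: le_trans (V_lip _ _ (fhat_inDelta g z1D) (fhat_inDelta g z2D)) _.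
by rewrite ler_pM2l // fhat_lipschitz.
Qed.

End Stage.

Section ValueFunction.
Variables (R : realType) (T : nat) (X U W : finType)
  (f : nat -> X -> U -> W -> (X -> R) -> X)
  (Pw : nat -> W -> R)
  (ell : nat -> X -> U -> (X -> R) -> R).
Hypothesis HPw : forall t, (1 <= t <= T)%N -> is_law (Pw t).
Hypothesis HLip : forall t, (1 <= t <= T)%N ->
  exists K1 K2 : R, 0 < K1 /\ 0 < K2 /\
  (forall (x y : X) (u : U) (z1 z2 : X -> R), inI z1 -> inI z2 ->
     `|trans f Pw t y x u z1 - trans f Pw t y x u z2|
       <= K1 * supnorm (fun x' => z1 x' - z2 x')) /\
  (forall (x : X) (u : U) (z1 z2 : X -> R), inI z1 -> inI z2 ->
     `|ell t x u z1 - ell t x u z2|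
       <= K2 * supnorm (fun x' => z1 x' - z2 x')).

Lemma Vaux_lipschitz n t : (1 <= t)%N -> (t + n = T.+1)%N ->
  exists K : R, 0 < K /\ lipschitz_on_Delta (Vaux f Pw ell n t) K.
Proof.
elim: n t => [|n IHn] t t_ge1 tn.
  exists 1; split=> // z1 z2 _ _.
  by rewrite /= subrr normr0 mul1r supnorm_ge0.
have tT : (1 <= t <= T)%N by lia.
have [|K [K_gt0 V_lip]] := IHn t.+1 isT; first lia.
have [K1 [K2 [K1_gt0 [K2_gt0 [trans_lip ell_lip]]]]] := HLip tT.
have [K' [K'_gt0 V'_lip]] :=
  bellman_lipschitz (HPw tT) K1_gt0 K2_gt0 trans_lip ell_lip K_gt0 V_lip.
by exists K'.
Qed.

End ValueFunction.

Theorem proposition1 (R : realType) (T : nat) (X U W : finType)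
  (f : nat -> X -> U -> W -> (X -> R) -> X)
  (Pw : nat -> W -> R)
  (ell : nat -> X -> U -> (X -> R) -> R)
  (HPw : forall t, (1 <= t <= T)%N -> is_law (Pw t))
  (Hell : forall t x u z, (1 <= t <= T)%N -> 0 <= ell t x u z)
  (HLip : forall t, (1 <= t <= T)%N ->
     exists K1 K2 : R, 0 < K1 /\ 0 < K2 /\
     (forall (x y : X) (u : U) (z1 z2 : X -> R), inI z1 -> inI z2 ->
        `|trans f Pw t y x u z1 - trans f Pw t y x u z2|
          <= K1 * supnorm (fun x' => z1 x' - z2 x')) /\
     (forall (x : X) (u : U) (z1 z2 : X -> R), inI z1 -> inI z2 ->
        `|ell t x u z1 - ell t x u z2|
          <= K2 * supnorm (fun x' => z1 x' - z2 x'))) :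
  forall t, (1 <= t <= T)%N ->
  exists K : R, 0 < K /\
    forall z1 z2 : X -> R, inDelta z1 -> inDelta z2 ->
      `|Vhat f Pw ell T t z1 - Vhat f Pw ell T t z2|
        <= K * supnorm (fun x => z1 x - z2 x).
Proof.
move=> t /andP[t_ge1 t_leT].
by apply: (Vaux_lipschitz HPw HLip) => //; lia.
Qed.
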